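(* For all integers $q\ge1$ and $t\ge0$, $\mathsf{DEL}_{\mathrm{cor}}(q,2t)\le \mathsf{INDEL}_{\mathrm{cor}}(q,t)\le \mathsf{DEL}_{\mathrm{cor}}(q,t).$
   Context: Let $[q]=\{0,1,\dots,q-1\}$. For $1\le m\le q$, a partial permutation of length $m$ over $[q]$ is a sequence $\pi=(\pi_1,\dots,\pi_m)$ of $m$ pairwise distinct elements of $[q]$. Let $\mathcal{S}_m^q$ be the set of those of length $m$ and $\mathcal{S}_{\mathrm{all}}^q=\bigcup_{m=1}^{q}\mathcal{S}_m^q$. A code is any subset of $\mathcal{S}_{\mathrm{all}}^q$. For $\pi$ of length $m$ and integer $j\ge 0$, $\pi_{\downarrow j}=(\pi_{k+1},\dots,\pi_m)$ with $k=\min(j,m-1)$; $\mathcal{B}_{\mathrm{del}}^t(\pi)=\{\pi_{\downarrow j}:0\le j\le t\}$. $\mathcal{B}_{\mathrm{indel}}^t(\pi)$ is the set of all partial permutations obtainable from $\pi$ by at most $t$ operations, each either a single tail deletion (removing the first symbol of a partial permutation of length at least $2$) or a single tail insertion (prepending an element of $[q]$ not already occurring). For $X\in\{\mathrm{del},\mathrm{indel}\}$, a code $\mathcal{C}$ is $t$-tail-$X$-correcting if $\mathcal{B}_X^t(\pi_1)\cap\mathcal{B}_X^t(\pi_2)=\emptyset$ for all distinct $\pi_1,\pi_2\in\mathcal{C}$. $\mathsf{DEL}_{\mathrm{cor}}(q,t)$ and $\mathsf{INDEL}_{\mathrm{cor}}(q,t)$ denote the maximum sizes of $t$-tail-deletion-correcting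 and $t$-tail-indel-correcting codes in $\mathcal{S}_{\mathrm{all}}^q$. *)

From mathcomp Require Import all_boot.
Set Implicit Arguments. Unset Strict Implicit. Unset Printing Implicit Defensive.

(* A partial permutation over [q] = {0,..,q-1} is a nonempty duplicate-free
   sequence of naturals < q (its length is then automatically <= q). *)
Definition is_pperm (q : nat) (s : seq nat) : bool :=
  [&& 0 < size s, uniq s & all (fun x => x < q) s].

Fixpoint words (q m : nat) : seq (seq nat) :=
  if m is m'.+1 then [seq a :: w | a <- iota 0 q, w <- words q m'] else [:: [::]].

Definition univ (q : nat) : seq (seq nat) :=
  [seq s <- flatten [seq words q m | m <- iota 1 q] | uniq s].

Definition tail_del (j : nat) (s : seq nat) : seq nat := drop (minn j (size s).-1) s.

Definition del_ball (t : nat) (s : seq nat) : seq (seq nat) :=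
  [seq tail_del j s | j <- iota 0 t.+1].

Definition indel_step (q : nat) (s : seq nat) : seq (seq nat) :=
  (if 1 < size s then [:: behead s] else [::]) ++
  [seq a :: s | a <- iota 0 q & a \notin s].

Fixpoint indel_ball (q t : nat) (s : seq nat) : seq (seq nat) :=
  if t is t'.+1 then
    let b := indel_ball q t' s in b ++ flatten [seq indel_step q x | x <- b]
  else [:: s].

Definition correcting (q : nat) (ball : seq nat -> seq (seq nat))
    (C : {set seq_sub (univ q)}) : bool :=
  [forall p1 in C, forall p2 in C,
     (p1 != p2) ==> ~~ has (fun x => x \in ball (ssval p2)) (ball (ssval p1))].

Definition DEL_cor (q t : nat) : nat :=
  \max_(C : {set seq_sub (univ q)} | correcting (del_ball t) C) #|C|.

Definition INDEL_cor (q t : nat) : nat :=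
  \max_(C : {set seq_sub (univ q)} | correcting (indel_ball q t) C) #|C|.

(** Every element of the indel ball of radius [t] around [s] has the form
    [w ++ drop k s] with [size w + k <= t]: deletions only ever strip a prefix
    of [s], insertions only grow [w], and deleting an inserted symbol just
    shrinks [w].  If two such words [w1 ++ drop k1 s1 = w2 ++ drop k2 s2]
    coincide with [size w2 <= size w1], dropping [size w1] symbols from both
    sides exhibits [drop k1 s1] as a tail deletion of [s2] of at most
    [2 t] symbols, so indel balls of radius [t] meet only when deletion balls of
    radius [2 t] do.  Conversely, deleting [j <= t] tail symbols takes [j] indel
    operations, so deletion balls lie inside indel balls of the same radius. *)

From mathcomp Require Import all_boot.
From mathcomp Require Import zify.
Set Implicit Arguments. Unset Strict Implicit.

Lemma size_words q m s : s \in words q m -> size s = m.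
Proof.
elim: m s => [|m IHm] s /=; first by rewrite inE => /eqP ->.
by case/allpairsP => -[a w] [_ /= /IHm <- ->].
Qed.

Lemma size_univ_gt0 q s : s \in univ q -> 0 < size s.
Proof.
rewrite mem_filter => /andP[_ /flattenP[_ /mapP[m m_in ->] /size_words ->]].
by move: m_in; rewrite mem_iota; lia.
Qed.

Lemma tail_del_drop j s : j < size s -> tail_del j s = drop j s.
Proof. by move=> lt_js; rewrite /tail_del; congr drop; lia. Qed.

Lemma drop_in_del_ball t j s : j <= t -> j < size s -> drop j s \in del_ball t s.
Proof.
move=> le_jt lt_js; rewrite -tail_del_drop //.
by apply/mapP; exists j; rewrite // mem_iota; lia.
Qed.

Section IndelBall.

Variable q : nat.

Lemma indel_stepP x y : y \in indel_step q x ->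
  (1 < size x /\ y = behead x) \/ exists a, y = a :: x.
Proof.
rewrite mem_cat => /orP[|/mapP[a _ ->]]; last by right; exists a.
by case: ifP => // x_gt1; rewrite inE => /eqP ->; left.
Qed.

Lemma indel_ball_shape t s y : 0 < size s -> y \in indel_ball q t s ->
  exists w k, [/\ y = w ++ drop k s, k < size s & size w + k <= t].
Proof.
move=> s_gt0; elim: t y => [|t IHt] y /=.
  by rewrite inE => /eqP ->; exists [::], 0; rewrite drop0.
rewrite mem_cat => /orP[/IHt[w [k [-> lt_ks le_wkt]]] | /flattenP[st /mapP[x]]].
  by exists w, k; split => //; lia.
move=> /IHt[w [k [-> lt_ks le_wkt]]] -> /indel_stepP[[x_gt1 ->] | [a ->]]; last first.
  by exists (a :: w), k; split => //=; lia.
case: w x_gt1 le_wkt => [|a w] /= x_gt1 le_wkt; last by exists w, k; split => //; lia.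
exists [::], k.+1; rewrite -drop1 drop_drop.
by move: x_gt1; rewrite size_drop; split => //; lia.
Qed.

Lemma indel_ball_monotone t s : {subset indel_ball q t s <= indel_ball q t.+1 s}.
Proof. by move=> y y_in /=; rewrite mem_cat y_in. Qed.

Lemma tail_del_in_indel_ball j s : tail_del j s \in indel_ball q j s.
Proof.
elim: j => [|j IHj] /=; first by rewrite /tail_del min0n drop0 inE.
rewrite mem_cat; have [lt_js | le_sj] := ltnP j (size s).-1; last first.
  by rewrite /tail_del (_ : minn j.+1 _ = minn j (size s).-1) ?IHj //; lia.
apply/orP; right; apply/flattenP; exists (indel_step q (tail_del j s)).
  exact: map_f.
rewrite !tail_del_drop /indel_step ?size_drop; try lia.
by rewrite ifT -?drop1 ?drop_drop ?add1n ?mem_head //; lia.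
Qed.

Lemma del_ball_sub_indel_ball t s : {subset del_ball t s <= indel_ball q t s}.
Proof.
move=> y /mapP[j]; rewrite mem_iota add0n ltnS => /andP[_ le_jt] ->.
elim: t le_jt => [|t IHt]; first by rewrite leqn0 => /eqP ->; exact: tail_del_in_indel_ball.
rewrite leq_eqVlt => /orP[/eqP -> | /IHt /indel_ball_monotone //].
exact: tail_del_in_indel_ball.
Qed.

End IndelBall.

Lemma common_tail_del_ball t s1 s2 w1 w2 k1 k2 :
  w1 ++ drop k1 s1 = w2 ++ drop k2 s2 -> k1 < size s1 -> k2 < size s2 ->
  size w1 + k1 <= t -> size w2 + k2 <= t -> size w2 <= size w1 ->
  has (fun x => x \in del_ball (2 * t) s2) (del_ball (2 * t) s1).
Proof.
move=> eq_w lt_k1 lt_k2 le_wk1 le_wk2 le_w21.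
have eq_drop : drop k1 s1 = drop (size w1 - size w2 + k2) s2.
  have := congr1 (drop (size w1)) eq_w.
  by rewrite drop_size_cat // drop_cat ltnNge le_w21 /= drop_drop.
have size_drop_gt0 : 0 < size (drop k1 s1) by rewrite size_drop; lia.
apply/hasP; exists (drop k1 s1); first by apply: drop_in_del_ball; lia.
move: size_drop_gt0; rewrite eq_drop size_drop => ?.
by apply: drop_in_del_ball; lia.
Qed.

Lemma indel_ball_meet_del_ball q t s1 s2 : 0 < size s1 -> 0 < size s2 ->
  has (fun x => x \in indel_ball q t s2) (indel_ball q t s1) ->
  has (fun x => x \in del_ball (2 * t) s2) (del_ball (2 * t) s1).
Proof.
move=> s1_gt0 s2_gt0 /hasP[y y_in1 y_in2].
have [w1 [k1 [y_eq1 lt_k1 le_wk1]]] := indel_ball_shape s1_gt0 y_in1.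
have [w2 [k2 [y_eq2 lt_k2 le_wk2]]] := indel_ball_shape s2_gt0 y_in2.
have eq_w : w1 ++ drop k1 s1 = w2 ++ drop k2 s2 by rewrite -y_eq1 -y_eq2.
have [le_w21 | /ltnW le_w12] := leqP (size w2) (size w1).
  exact: common_tail_del_ball eq_w lt_k1 lt_k2 le_wk1 le_wk2 le_w21.
rewrite has_sym.
exact: common_tail_del_ball (esym eq_w) lt_k2 lt_k1 le_wk2 le_wk1 le_w12.
Qed.

Lemma correcting_weaken q (ball1 ball2 : seq nat -> seq (seq nat))
    (C : {set seq_sub (univ q)}) :
  (forall s1 s2, s1 \in univ q -> s2 \in univ q ->
     has (fun x => x \in ball1 s2) (ball1 s1) -> has (fun x => x \in ball2 s2) (ball2 s1)) ->
  correcting ball2 C -> correcting ball1 C.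
Proof.
move=> meet12 /forall_inP corr2; apply/forall_inP => p1 p1C.
apply/forall_inP => p2 p2C; apply/implyP => neq_p.
have /forall_inP/(_ p2 p2C) := corr2 p1 p1C; rewrite neq_p.
exact/contra/meet12/ssvalP/ssvalP.
Qed.

Lemma bigmax_card_monotone (T : finType) (P Q : pred {set T}) :
  (forall C, P C -> Q C) -> \max_(C | P C) #|C| <= \max_(C | Q C) #|C|.
Proof. by move=> PQ; apply/bigmax_leqP => C /PQ; exact: leq_bigmax_cond. Qed.

Theorem mainTheorem7 (q t : nat) :
  1 <= q -> DEL_cor q (2 * t) <= INDEL_cor q t <= DEL_cor q t.
Proof.
move=> _; apply/andP; split; apply: bigmax_card_monotone => C; apply: correcting_weaken.
  by move=> s1 s2 /size_univ_gt0 ? /size_univ_gt0 ?; exact: indel_ball_meet_del_ball.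
move=> s1 s2 _ _ /hasP[y y_in1 y_in2].
by apply/hasP; exists y; exact: del_ball_sub_indel_ball.
Qed.
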